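(* Let $f(z)=\sum_{j\ge0}\binom{2j}{j}\left(\sum_{k=0}^{j}\binom{j}{k}^2\binom{j+k}{k}\binom{2k}{j}\right)z^j\in1+z\mathbb{Z}[[z]]$. Then for every prime $p$ one has $\Lambda_p(f_{|p})=f_{|p}$, and there is a finite set $\mathcal{J}$ of primes such that $f\in\mathcal{L}(\mathcal{P}\setminus\mathcal{J})$, where $\mathcal{P}$ is the set of all primes.
   Context: For a prime $p$, $\mathbb{Z}_{(p)}$ is the localization of $\mathbb{Z}$ at $(p)$; for $f=\sum a(n)z^n\in\mathbb{Z}_{(p)}[[z]]$, $f_{|p}(z)=\sum (a(n)\bmod p)z^n$; $\Lambda_p(\sum a(n)z^n)=\sum a(np)z^n$. The height of a rational function $P/Q$ with $P,Q$ coprime polynomials is $\max(\deg P,\deg Q)$. For an infinite set $\mathcal{S}$ of primes, $\mathcal{L}(\mathcal{S})$ is the set of $f\in 1+z\mathbb{Q}[[z]]$ such that there is a constant $C>0$ independent of $p$ with: for every $p\in\mathcal{S}$, $f\in\mathbb{Z}_{(p)}[[z]]$, and there exist an integer $l_p>0$ and $A_p\in\mathbb{F}_p(z)\cap\mathbb{F}_p[[z]]$ with $f_{|p}(z)=A_p(z)f_{|p}(z^{p^{l_p}})$ and height of $A_p$ at most $Cp^{l_p}$. *)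

From HB Require Import structures.
From mathcomp Require Import all_boot all_order all_algebra.
Set Implicit Arguments. Unset Strict Implicit. Unset Printing Implicit Defensive.
Import Order.TTheory GRing.Theory Num.Theory.
Local Open Scope ring_scope.

(* Formal power series are represented by their coefficient sequences nat -> R. *)

Definition in_Zloc (p : nat) (q : rat) : bool := ~~ (p%:Z %| denq q)%Z.

Definition red_rat (p : nat) (q : rat) : 'F_p := (numq q)%:~R / (denq q)%:~R.

Definition red_ser (p : nat) (f : nat -> rat) : nat -> 'F_p := fun n => red_rat p (f n).

Definition Lambda {R : Type} (p : nat) (g : nat -> R) : nat -> R := fun n => g (n * p)%N.

Definition polyser_mul {R : nzRingType} (P : {poly R}) (g : nat -> R) : nat -> R :=
  fun n => \sum_(i < n.+1) P`_i * g (n - i)%N.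

Definition ser_subst_pow {R : nzRingType} (g : nat -> R) (m : nat) : nat -> R :=
  fun n => if (m %| n)%N then g (n %/ m)%N else 0.

Definition height {R : nzRingType} (P Q : {poly R}) : nat := maxn (size P).-1 (size Q).-1.

Definition in_L (S : nat -> Prop) (f : nat -> rat) : Prop :=
  f 0%N = 1 /\
  exists C : rat, 0 < C /\
    forall p : nat, prime p -> S p ->
      (forall n, in_Zloc p (f n)) /\
      exists l : nat, (0 < l)%N /\
        exists P Q : {poly 'F_p},
          (* A_p = P/Q, reduced, and in F_p[[z]] *)
          coprimep P Q /\ Q`_0 != 0 /\
          (* f_{|p}(z) = A_p(z) f_{|p}(z^{p^l}), i.e. Q f_{|p}(z) = P f_{|p}(z^{p^l}) *)
          (forall n, polyser_mul Q (red_ser p f) n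
                     = polyser_mul P (ser_subst_pow (red_ser p f) (p ^ l)%N) n) /\
          (height P Q)%:R <= C * (p ^ l)%:R.

Definition a20 (j : nat) : nat :=
  ('C(j.*2, j) * \sum_(0 <= k < j.+1) ('C(j, k) ^ 2 * 'C(j + k, k) * 'C(k.*2, j)))%N.

Definition f20 : nat -> rat := fun j => (a20 j)%:R.

From HB Require Import structures.
From mathcomp Require Import all_boot all_order all_algebra.
From mathcomp Require Import zify ring.
Set Implicit Arguments. Unset Strict Implicit. Unset Printing Implicit Defensive.
Import Order.TTheory GRing.Theory Num.Theory.
Local Open Scope ring_scope.

(* Proof of Theorem 20.  The coefficients a(j) of f have the Lucas property
   modulo every prime p: a(np + r) = a(n) a(r) in F_p for all digits r < p.
   Everything follows from this with J empty, C = 1 and l_p = 1: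
   - since a(0) = 1, the Lucas property gives Lambda_p(f_{|p}) = f_{|p};
   - writing n = (n / p) p + (n mod p) gives f_{|p}(z) = A_p(z) f_{|p}(z^p)
     with the polynomial A_p = sum_{r < p} a(r) z^r, of height < p.
   The file first develops these consequences for an arbitrary Lucas sequence
   over a commutative ring, then two bookkeeping facts on sums indexed by
   base-p digits, then Lucas' theorem C(np + r, mp + s) = C(n, m) C(r, s) in
   F_p (proved by induction from C(p + a, b) = C(a, b) + C(a, b - p)).  The
   Lucas property of a(j) = C(2j, j) sum_k C(j,k)^2 C(j+k,k) C(2k,j) follows
   termwise: C(2j, j) vanishes mod p when the last digit r of j has 2r >= p,
   and otherwise each summand factors digitwise. *)

Lemma polyser_mul1 (R : nzRingType) (h : nat -> R) n : polyser_mul 1 h n = h n.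
Proof.
rewrite /polyser_mul big_ord_recl coef1 mul1r subn0 big1 ?addr0 // => i _.
by rewrite coef1 mul0r.
Qed.

Section LucasSequences.
Variables (R : comNzRingType) (p : nat).
Hypothesis p_gt0 : (0 < p)%N.

Definition lucas_seq (g : nat -> R) : Prop :=
  forall n r, (r < p)%N -> g (n * p + r)%N = g n * g r.

Variable g : nat -> R.
Hypothesis g_lucas : lucas_seq g.

Lemma lucas_Lambda : g 0%N = 1 -> forall n, Lambda p g n = g n.
Proof. by move=> g0 n; rewrite /Lambda -[(n * p)%N]addn0 g_lucas // g0 mulr1. Qed.

Definition digit_poly : {poly R} := \poly_(i < p) g i.

(* The functional equation g(z) = digit_poly(z) g(z^p), in the form
   1 * g(z) = digit_poly(z) * g(z^p) used by the class L(S): in the n-th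
   coefficient of the right-hand side only the index i = n mod p survives. *)
Lemma lucas_functional_eq n :
  polyser_mul 1 g n = polyser_mul digit_poly (ser_subst_pow g p) n.
Proof.
rewrite polyser_mul1 /polyser_mul.
have n_digit : (n %% p < n.+1)%N by rewrite ltnS leq_mod.
rewrite (bigD1 (Ordinal n_digit)) //= big1 ?addr0; last first.
  move=> i ne_i; rewrite coef_poly /ser_subst_pow.
  case: ltnP => lt_ip; last by rewrite mul0r.
  case: ifP => [/dvdnP [k hk]|_]; last by rewrite mulr0.
  have n_eq : n = (k * p + i)%N by rewrite -hk subnK // -ltnS.
  case/eqP: ne_i; apply: val_inj => /=.
  by rewrite [in RHS]n_eq modnMDl modn_small.
have -> : (n - n %% p = n %/ p * p)%N by rewrite {1}(divn_eq n p) addnK.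
rewrite coef_poly ltn_pmod // /ser_subst_pow dvdn_mull // mulnK //.
by rewrite {1}(divn_eq n p) g_lucas ?ltn_pmod // mulrC.
Qed.

Lemma height_digit_poly : (height digit_poly 1 <= p)%N.
Proof.
rewrite /height polyseq1 /= maxn0.
exact: leq_trans (leq_pred _) (size_poly _ _).
Qed.

End LucasSequences.

Section DigitSums.
Variable V : nmodType.

Lemma sum_widen (F : nat -> V) j K : (forall k, (j < k)%N -> F k = 0) -> (j < K)%N ->
  \sum_(0 <= k < j.+1) F k = \sum_(0 <= k < K) F k.
Proof.
move=> F_vanish lt_jK; rewrite [RHS](big_cat_nat _ (n := j.+1)) //=.
rewrite [X in _ = _ + X]big1_seq ?addr0 // => k /andP [_].
by rewrite mem_index_iota => /andP [lt_jk _]; apply: F_vanish.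
Qed.

Lemma sum_digits (F : nat -> V) N p :
  \sum_(0 <= k < N * p) F k = \sum_(0 <= m < N) \sum_(0 <= s < p) F (m * p + s)%N.
Proof.
elim: N => [|N IHN]; first by rewrite mul0n !big_geq.
rewrite big_nat_recr //= -IHN mulSn addnC (big_cat_nat _ (n := N * p)) ?leq_addr //=.
rewrite -{2}(add0n (N * p)%N) big_addn addKn; congr (_ + _).
by apply: eq_bigr => s _; rewrite addnC.
Qed.

End DigitSums.

Lemma lucas_triangular_sum (R : nzSemiRingType) p (T : nat -> nat -> R) n r :
  (r < p)%N -> (forall j k, (j < k)%N -> T j k = 0) ->
  (forall m s, (s < p)%N -> T (n * p + r)%N (m * p + s)%N = T n m * T r s) ->
  \sum_(0 <= k < (n * p + r).+1) T (n * p + r)%N k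
    = (\sum_(0 <= k < n.+1) T n k) * \sum_(0 <= k < r.+1) T r k.
Proof.
move=> lt_rp T_vanish T_lucas.
have lt_top_digits : (n * p + r < n.+1 * p)%N by rewrite mulSn; lia.
rewrite (sum_widen (T_vanish _) lt_top_digits) (sum_widen (T_vanish r) lt_rp).
rewrite sum_digits mulr_suml; apply: eq_big_nat => m _.
by rewrite mulr_sumr; apply: eq_big_nat => s /andP [_ lt_sp]; apply: T_lucas.
Qed.

Definition inner_term (j k : nat) : nat := ('C(j, k) ^ 2 * 'C(j + k, k) * 'C(k.*2, j))%N.

Lemma a20E j : a20 j = ('C(j.*2, j) * \sum_(0 <= k < j.+1) inner_term j k)%N.
Proof. by []. Qed.

Lemma inner_term_vanish j k : (j < k)%N -> inner_term j k = 0%N.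
Proof. by move=> lt_jk; rewrite /inner_term bin_small. Qed.

Section LucasTheorem.
Variable p : nat.
Hypothesis p_prime : prime p.

(* Coefficientwise form of (1 + X)^(p + a) = (1 + X^p) (1 + X)^a in F_p[X]. *)
Lemma bin_addp a b :
  'C(p + a, b)%:R = 'C(a, b)%:R + (if (p <= b)%N then 'C(a, b - p) else 0%N)%:R :> 'F_p.
Proof.
have p_gt0 := prime_gt0 p_prime.
elim: a b => [|a IHa] [|b]; try by rewrite !bin0 leqNgt p_gt0 addr0.
- rewrite addn0 bin0n; have [lt_bp|le_pb] := ltnP b.+1 p.
    by rewrite -Fp_nat_mod // (eqP (prime_dvd_bin _ _)) //= addr0.
  have [<-|ne_bp] := eqVneq b.+1 p; first by rewrite binn subnn /= add0r.
  rewrite bin_small; last by lia.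
  by rewrite bin0n (_ : (b.+1 - p == 0)%N = false) ?addr0 //; lia.
- rewrite addnS binS natrD !IHa binS natrD.
  have [le_pb|lt_bp] := leqP p b.
    rewrite (leq_trans le_pb) // subSn // (binS a (b - p)) natrD; ring.
  have [e|ne] := eqVneq b.+1 p; first by rewrite -e leqnn subnn !bin0 addr0; ring.
  by rewrite (_ : (p <= b.+1)%N = false) ?addr0 //; lia.
Qed.

Lemma lucas_bin n m r s : (r < p)%N -> (s < p)%N ->
  'C(n * p + r, m * p + s)%:R = 'C(n, m)%:R * 'C(r, s)%:R :> 'F_p.
Proof.
move=> lt_rp lt_sp; elim: n m => [|n IHn] [|m].
- by rewrite !mul0n !add0n bin0 mul1r.
- by rewrite mul0n add0n bin0n mul0r bin_small //; lia.
- by rewrite mulSn -addnA bin_addp IHn ifF ?bin0 ?addr0 //; lia.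
rewrite mulSn -addnA bin_addp ifT; last by lia.
rewrite (_ : m.+1 * p + s - p = m * p + s)%N; last by rewrite mulSn; lia.
by rewrite !IHn -mulrDl -natrD binS.
Qed.

Lemma lucas_bin_vanish n m r s : (s < p)%N -> (r < s)%N ->
  'C(n * p + r, m * p + s)%:R = 0 :> 'F_p.
Proof. by move=> lt_sp lt_rs; rewrite lucas_bin ?(bin_small lt_rs) ?mulr0 //; lia. Qed.

(* C(2j, j) vanishes mod p when the last digit r of j satisfies 2r >= p:
   doubling j then produces a carry, so the last digit of 2j is 2r - p < r. *)
Lemma central_bin_vanish k r : (r < p)%N -> (p <= r.*2)%N ->
  'C((k * p + r).*2, k * p + r)%:R = 0 :> 'F_p.
Proof.
move=> lt_rp le_p2r.
rewrite (_ : (k * p + r).*2 = k.*2.+1 * p + (r.*2 - p))%N; last first.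
  by rewrite doubleD doubleMl mulSn; lia.
by rewrite lucas_bin_vanish //; lia.
Qed.

Lemma central_bin_lucas n r : (r < p)%N ->
  'C((n * p + r).*2, n * p + r)%:R = 'C(n.*2, n)%:R * 'C(r.*2, r)%:R :> 'F_p.
Proof.
move=> lt_rp; have [lt_2rp|le_p2r] := ltnP r.*2 p.
  by rewrite doubleD doubleMl lucas_bin.
have := central_bin_vanish 0 lt_rp le_p2r; rewrite mul0n add0n => ->.
by rewrite central_bin_vanish // mulr0.
Qed.

Lemma inner_term_lucas n m r s : (r.*2 < p)%N -> (s < p)%N ->
  (inner_term (n * p + r) (m * p + s))%:R
    = (inner_term n m)%:R * (inner_term r s)%:R :> 'F_p.
Proof.
move=> lt_2rp lt_sp; have lt_rp : (r < p)%N by lia.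
rewrite /inner_term !natrM; have [le_sr|lt_rs] := leqP s r; last first.
  by rewrite lucas_bin_vanish // (bin_small lt_rs) !(mul0r, mulr0).
rewrite (_ : n * p + r + (m * p + s) = (n + m) * p + (r + s))%N; last first.
  by rewrite mulnDl; lia.
rewrite (_ : (m * p + s).*2 = m.*2 * p + s.*2)%N; last by rewrite doubleD doubleMl.
rewrite !lucas_bin //; try lia.
ring.
Qed.

Lemma a20_lucas : lucas_seq p (fun j => (a20 j)%:R : 'F_p).
Proof.
move=> n r lt_rp; rewrite !a20E !natrM central_bin_lucas // !natr_sum.
have [lt_2rp|le_p2r] := ltnP r.*2 p; last first.
  have := central_bin_vanish 0 lt_rp le_p2r; rewrite mul0n add0n => ->.
  by rewrite !(mulr0, mul0r).
rewrite (lucas_triangular_sum (T := fun j k => (inner_term j k)%:R) lt_rp).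
- by ring.
- by move=> j k /inner_term_vanish ->.
- by move=> m s; apply: inner_term_lucas.
Qed.

End LucasTheorem.

Lemma rat_of_nat (n : nat) : n%:R = (n%:Z)%:Q.
Proof. by rewrite pmulrn. Qed.

Lemma red_nat p (n : nat) : red_rat p n%:R = n%:R.
Proof. by rewrite /red_rat rat_of_nat numq_int denq_int divr1 pmulrn. Qed.

Lemma in_Zloc_nat p (n : nat) : prime p -> in_Zloc p n%:R.
Proof.
move=> p_prime; rewrite /in_Zloc rat_of_nat denq_int dvdzE /= dvdn1.
by rewrite neq_ltn prime_gt1 ?orbT.
Qed.

Lemma red_f20 p n : red_ser p f20 n = (a20 n)%:R.
Proof. exact: red_nat. Qed.

Lemma a20_0 : a20 0 = 1%N.
Proof. by rewrite /a20 big_nat1. Qed.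

Lemma red_f20_lucas p : prime p -> lucas_seq p (red_ser p f20).
Proof. by move=> p_prime n r lt_rp; rewrite !red_f20; apply: a20_lucas. Qed.

Theorem mainTheorem20 :
  (forall p : nat, prime p ->
     forall n : nat, Lambda p (red_ser p f20) n = red_ser p f20 n) /\
  exists J : seq nat,
    in_L (fun p => prime p /\ p \notin J) f20.
Proof.
split=> [p p_prime n|].
  rewrite (lucas_Lambda (prime_gt0 p_prime) (red_f20_lucas p_prime)) //.
  by rewrite red_f20 a20_0.
exists [::]; split; first by rewrite /f20 a20_0.
exists 1; split=> // p p_prime _; split=> [n|]; first exact: in_Zloc_nat.
have p_gt0 := prime_gt0 p_prime; have f_lucas := red_f20_lucas p_prime.
exists 1%N; split=> //.
exists (digit_poly p (red_ser p f20)), 1; split; first exact: coprimep1.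
split; first by rewrite coef1 oner_neq0.
split=> [n|]; first by rewrite expn1; exact: (lucas_functional_eq p_gt0 f_lucas n).
by rewrite mul1r expn1 ler_nat height_digit_poly.
Qed.
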